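(* (a) There is no odd perfect number of the form $n = 5^{\alpha} 3^{2b} q_1^{6k_1+2}\cdots q_t^{6k_t+2}$, where $\alpha \ge 1$, $b \ge 0$ and $k_1,\ldots,k_t \ge 0$ are integers, $5 < q_1 < \cdots < q_t$ are primes, and at least one of $q_1,\ldots,q_t$ is good. (b) There is no perfect number of the form $n = 5^{\alpha} 3^{2b} q_1^{6k_1+2}\cdots q_t^{6k_t+2}$, where $\alpha \ge 1$, $b\ge 0$ and $k_1,\ldots,k_t\ge 0$ are integers, $5 < q_1 < \cdots < q_t$ are primes, and at least one of $q_1,\ldots,q_t$ does not exceed $157$. (c) If every prime $p > 7$ is good, then there is no odd perfect number of the form $n = 5^{\alpha} 3^{2b} q_1^{6k_1+2}\cdots q_t^{6k_t+2}$, where $\alpha \ge 1$, $b\ge 0$ and $k_1,\ldots,k_t\ge 0$ are integers and $q_1,\ldots,q_t$ are primes exceeding $5$.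
   Context: A positive integer $n$ is perfect if $\sigma(n)=2n$, where $\sigma$ is the sum-of-divisors function. Let $\Phi_3(x) = x^2+x+1$ be the third cyclotomic polynomial. Let $\Sigma$ be the set of primes $p$ with $p \equiv 2$ or $p \equiv 4 \pmod 7$. For a prime $x > 7$, let $T(x)$ be the set of primes $q \neq 3$ with $q \mid \Phi_3(x)$. For a prime $p > 7$, define sets $S_n(p)$ recursively by $S_0(p) = \{p\}$ and $S_{n+1}(p) = S_n(p) \cup \bigcup_{x \in S_n(p)} T(x)$. A prime $p > 7$ is called good if $S_n(p) \cap \Sigma \neq \emptyset$ for some integer $n \ge 0$. *)

From mathcomp Require Import all_boot.
Set Implicit Arguments. Unset Strict Implicit. Unset Printing Implicit Defensive.

Definition sigma (n : nat) : nat := \sum_(d <- divisors n) d.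

Definition perfect (n : nat) : Prop := 0 < n /\ sigma n = 2 * n.

Definition Phi3 (x : nat) : nat := x ^ 2 + x + 1.

Definition inSigma (p : nat) : Prop := prime p /\ (p %% 7 = 2 \/ p %% 7 = 4).

Definition inT (x q : nat) : Prop :=
  prime x /\ 7 < x /\ prime q /\ q <> 3 /\ q %| Phi3 x.

Fixpoint inS (n p x : nat) : Prop :=
  match n with
  | 0 => x = p
  | n'.+1 => inS n' p x \/ exists y, inS n' p y /\ inT y x
  end.

Definition good (p : nat) : Prop :=
  exists n x, inS n p x /\ inSigma x.

Definition special_form (n a b t : nat) (q k : nat -> nat) : Prop :=
  1 <= a /\
  (forall i, i < t -> prime (q i) /\ 5 < q i) /\
  (forall i j, i < j -> j < t -> q i < q j) /\
  n = 5 ^ a * 3 ^ (2 * b) * \prod_(i < t) q i ^ (6 * k i + 2).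

From Stdlib Require Import NArith Arith Lia.
From mathcomp Require Import all_boot zify cyclic.

Set Implicit Arguments. Unset Strict Implicit. Unset Printing Implicit Defensive.

(* Let n = 5^a 3^(2b) q_1^(6k_1+2) ... q_t^(6k_t+2) be perfect.  As 6k+2 = 2 (mod 3),
   Phi3(q_i) = 1 + q_i + q_i^2 divides sigma(q_i^(6k_i+2)), hence also sigma(n) = 2n,
   and, being odd, it divides n.  Thus Phi3(r) | n for every prime divisor r <> 3, 5 of n;
   iterating, every element of S_m(q_i) divides n, and if q_i is good some prime
   x = 2, 4 (mod 7) divides n, whence 7 | Phi3(x) | n.  But 7 | n forces 7 = q_j, so that
   7^2 | n and 3 | Phi3(7) | n, i.e. 5 * 3^2 * 7^2 | n; this divisor is abundant, which
   is impossible for a divisor of a perfect number.  For (b), explicit chains through the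
   sets T certify that every prime 7 < p <= 157 is good (the 13-digit prime occurring in
   them is certified by Pocklington's criterion); for (c), t = 0 is excluded because
   sigma(5^a 3^c) / (5^a 3^c) < 5/4 * 3/2 < 2. *)

(** * Sums of divisors *)

Lemma gcdn_coprimeM d m n :
  coprime m n -> d %| m * n -> gcdn d m * gcdn d n = d.
Proof.
move=> cmn dmn; apply/eqP; rewrite eqn_dvd; apply/andP; split.
  rewrite Gauss_dvd ?dvdn_gcdl //.
  exact: coprime_dvdl (dvdn_gcdr _ _) (coprime_dvdr (dvdn_gcdr _ _) cmn).
have d_m : d %| gcdn d m * n by rewrite muln_gcdl dvdn_gcd dvdn_mulr.
by rewrite muln_gcdr dvdn_gcd dvdn_mull.
Qed.

Lemma divisors_coprimeM m n : 0 < m -> 0 < n -> coprime m n ->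
  perm_eq (divisors (m * n)) [seq i * j | i <- divisors m, j <- divisors n].
Proof.
move=> m_gt0 n_gt0 cmn; have mn_gt0 : 0 < m * n by rewrite muln_gt0 m_gt0.
have gcdM i j : i %| m -> j %| n -> gcdn m (i * j) = i /\ gcdn n (i * j) = j.
  move=> im jn; rewrite Gauss_gcdl ?Gauss_gcdr; first by split; apply/gcdn_idPr.
    by apply: coprime_dvdr im _; rewrite coprime_sym.
  exact: coprime_dvdr jn cmn.
apply: uniq_perm; rewrite ?divisors_uniq //.
  rewrite allpairs_uniq ?divisors_uniq // => -[? ?] [? ?].
  move=> /allpairsP[[i j] [/= + + [-> ->]]] /allpairsP[[i' j'] [/= + + [-> ->]]] /=.
  rewrite -!dvdn_divisors // => im jn i'm j'n ij.
  have [gi gj] := gcdM i j im jn; have [gi' gj'] := gcdM i' j' i'm j'n.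
  by congr pair; [rewrite -gi -gi' ij | rewrite -gj -gj' ij].
move=> d; rewrite -dvdn_divisors //; apply/idP/allpairsP => [dmn|[[i j] /=]].
  exists (gcdn d m, gcdn d n); rewrite -!dvdn_divisors // !dvdn_gcdr.
  by rewrite gcdn_coprimeM.
by rewrite -!dvdn_divisors // => -[im jn ->]; apply: dvdn_mul.
Qed.

Lemma sigma_coprimeM m n : 0 < m -> 0 < n -> coprime m n ->
  sigma (m * n) = sigma m * sigma n.
Proof.
move=> m_gt0 n_gt0 cmn; rewrite /sigma (perm_big _ (divisors_coprimeM m_gt0 n_gt0 cmn)).
by rewrite big_allpairs_dep big_distrl; apply: eq_bigr => i _; rewrite big_distrr.
Qed.

Lemma sigma_prime_pow p e : prime p -> sigma (p ^ e) = \sum_(i < e.+1) p ^ i.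
Proof.
move=> p_pr; rewrite /sigma -(big_mkord xpredT) -(big_map (expn p) xpredT id).
apply/perm_big/uniq_perm; rewrite ?divisors_uniq ?map_inj_uniq ?iota_uniq //.
  exact/expnI/prime_gt1.
move=> d; rewrite -dvdn_divisors ?expn_gt0 ?prime_gt0 //.
apply/(dvdn_pfactor _ _ p_pr)/mapP => -[i]; rewrite ?mem_index_iota => ie ->.
  by exists i; rewrite ?mem_index_iota.
by exists i.
Qed.

Lemma dvdn_sigma_leq m n : 0 < n -> m %| n -> n * sigma m <= m * sigma n.
Proof.
move=> n_gt0 /dvdnP[c def_n].
have [c_gt0 m_gt0] : 0 < c /\ 0 < m by apply/andP; rewrite -muln_gt0 -def_n.
have -> : n * sigma m = m * \sum_(d <- [seq c * d | d <- divisors m]) d.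
  by rewrite big_map -big_distrr def_n mulnAC mulnC.
rewrite leq_mul2l; apply/orP; right.
apply: (uniq_sub_le_big leqnn (fun x y => leq_addr y x)); rewrite ?divisors_uniq //.
  by rewrite map_inj_uniq ?divisors_uniq // => i j /eqP; rewrite eqn_pmul2l // => /eqP.
move=> e /mapP[d]; rewrite -!dvdn_divisors // def_n => dm ->.
by rewrite dvdn_pmul2l.
Qed.

Lemma perfect_dvdn_sigma_leq m n : perfect n -> m %| n -> sigma m <= 2 * m.
Proof.
move=> [n_gt0 sigma_n] /(dvdn_sigma_leq n_gt0).
by rewrite sigma_n mulnCA mulnA [_ * n]mulnC leq_pmul2l.
Qed.

Lemma sigma_prime_pow_lt p e : prime p -> p.-1 * sigma (p ^ e) < p ^ e.+1.
Proof.
by move=> p_pr; rewrite sigma_prime_pow // -predn_exp ltn_predL expn_gt0 prime_gt0.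
Qed.

Lemma not_perfect_5_3 a c : ~ perfect (5 ^ a * 3 ^ c).
Proof.
move=> [_]; rewrite sigma_coprimeM ?expn_gt0 ?coprimeXl ?coprimeXr // => sigma_n.
have := ltn_mul (sigma_prime_pow_lt a (isT : prime 5))
                (sigma_prime_pow_lt c (isT : prime 3)).
by rewrite !expnS; nia.
Qed.

(** * Phi3 and the sets S_m(p) *)

Lemma sum_expn_mul x k m :
  \sum_(i < k * m) x ^ i = (\sum_(i < k) x ^ i) * \sum_(j < m) x ^ (k * j).
Proof.
elim: m => [|m IH]; first by rewrite muln0 !big_ord0 muln0.
rewrite mulnS addnC big_split_ord IH big_ord_recr /= mulnDr; congr (_ + _).
by rewrite mulnC big_distrl; apply: eq_bigr => i _; rewrite expnD mulnC.
Qed.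

Lemma Phi3_dvd_sigma p k : prime p -> Phi3 p %| sigma (p ^ (6 * k + 2)).
Proof.
have -> : Phi3 p = \sum_(i < 3) p ^ i by rewrite /Phi3 !big_ord_recr big_ord0 /=; lia.
move=> p_pr; rewrite sigma_prime_pow // (_ : (6 * k + 2).+1 = 3 * (2 * k + 1)).
  by rewrite sum_expn_mul dvdn_mulr.
by lia.
Qed.

Lemma odd_Phi3 x : odd (Phi3 x).
Proof. by rewrite /Phi3 !oddD oddX /=; case: odd. Qed.

Lemma Phi3_mod x m : Phi3 x = Phi3 (x %% m) %[mod m].
Proof.
rewrite {1}(divn_eq x m) /Phi3; set c := x %/ m; set r := x %% m.
have -> : (c * m + r) ^ 2 + (c * m + r) + 1 = c * (c * m + 2 * r + 1) * m + (r ^ 2 + r + 1).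
  by lia.
by rewrite modnMDl.
Qed.

Lemma inSigma_dvd_Phi3 x : inSigma x -> 7 %| Phi3 x.
Proof. by case=> _; rewrite /dvdn Phi3_mod => -[] ->. Qed.

Lemma inSigma_good x : inSigma x -> good x.
Proof. by exists 0, x. Qed.

Lemma good_T x y : inT x y -> good y -> good x.
Proof.
move=> Txy [m [z [Syz Sigma_z]]]; exists m.+1, z; split=> //.
elim: m z Syz {Sigma_z} => [|m IH] z /=; first by move->; right; exists x.
by case=> [/IH|[w [/IH Sxw Twz]]]; [left | right; exists w].
Qed.

Section Phi3Closed.

Variable n : nat.
Hypothesis Phi3_closed :
  forall r, prime r -> r %| n -> r != 3 -> r != 5 -> Phi3 r %| n.

Lemma inS_dvdn p m x : p %| n -> inS m p x -> x %| n.
Proof.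
move=> pn; elim: m x => [|m IH] x /=; first by move->.
case=> [/IH // | [y [/IH yn [y_pr [y_gt7 [_ [_ x_Phi3]]]]]]].
by apply: dvdn_trans x_Phi3 (Phi3_closed y_pr yn _ _); lia.
Qed.

Lemma good_dvdn_7 p : p %| n -> good p -> 7 %| n.
Proof.
move=> pn [m [x [Sx Sigma_x]]]; have [x_pr x_mod7] := Sigma_x.
apply: dvdn_trans (inSigma_dvd_Phi3 Sigma_x) (Phi3_closed x_pr (inS_dvdn pn Sx) _ _);
  by apply/eqP => def_x; case: x_mod7; rewrite def_x.
Qed.

End Phi3Closed.

(** * Perfect numbers of the special form *)

Lemma prime_dvd_prod_pow (I : finType) (P : pred I) (f e : I -> nat) r :
  (forall i, P i -> prime (f i)) -> prime r ->
  r %| \prod_(i | P i) f i ^ e i -> exists2 i, P i & r = f i.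
Proof.
move=> f_pr r_pr; rewrite Euclid_dvd_prod // big_orE => /existsP[i /andP[Pi]].
by rewrite Euclid_dvdX // dvdn_prime2 ?f_pr // => /andP[/eqP-> _]; exists i.
Qed.

Lemma abundant_5_3_7 : 2 * (5 * 3 ^ 2 * 7 ^ 2) < sigma (5 * 3 ^ 2 * 7 ^ 2).
Proof. by rewrite /sigma unlock; vm_compute. Qed.

Section SpecialForm.

Variables (n a b t : nat) (q k : nat -> nat).
Hypothesis form : special_form n a b t q k.

Lemma form_q_spec i : i < t -> prime (q i) /\ 5 < q i.
Proof. by case: form => _ [q_spec _] /q_spec. Qed.

Lemma form_q_prime (i : 'I_t) : prime (q i).
Proof. exact: proj1 (form_q_spec (ltn_ord i)). Qed.

Lemma form_q_inj i j : i < t -> j < t -> q i = q j -> i = j.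
Proof.
have [_ [_ [q_incr _]]] := form => it jt eq_q.
by case: (ltngtP i j) => // [/q_incr | /q_incr]; [move/(_ jt) | move/(_ it)];
  rewrite eq_q ltnn.
Qed.

Lemma form_prime_dvd r :
  prime r -> r %| n -> [\/ r = 3, r = 5 | exists2 i, i < t & r = q i].
Proof.
have [_ [_ [_ ->]]] := form => r_pr.
rewrite !Euclid_dvdM // !Euclid_dvdX // (dvdn_prime2 r_pr (isT : prime 5)).
rewrite (dvdn_prime2 r_pr (isT : prime 3)).
case/orP => [/orP[/andP[/eqP-> _] | /andP[/eqP-> _]] | ]; [by constructor.. |].
case/(prime_dvd_prod_pow (fun i _ => form_q_prime i) r_pr) => i _ ->.
by constructor 3; exists i.
Qed.

Lemma form_dvdn_q_pow i : i < t -> q i ^ (6 * k i + 2) %| n.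
Proof.
have [_ [_ [_ ->]]] := form => it.
by rewrite dvdn_mull // (bigD1 (Ordinal it)) //= dvdn_mulr.
Qed.

Lemma form_dvdn_q_sq i : i < t -> q i ^ 2 %| n.
Proof.
by move=> it; apply: dvdn_trans (form_dvdn_q_pow it); rewrite dvdn_exp2l //; lia.
Qed.

Lemma form_dvdn_5 : 5 %| n.
Proof. by have [a_gt0 [_ [_ ->]]] := form; rewrite -mulnA dvdn_mulr // dvdn_exp. Qed.

Lemma form_dvdn_3 : 3 %| n -> 3 ^ 2 %| n.
Proof.
have [_ [_ [_ def_n]]] := form; rewrite {1}def_n.
rewrite !Euclid_dvdM // !Euclid_dvdX //.
case/orP => [/orP[/andP[//] | /andP[_ b_gt0]] | ].
  by rewrite def_n dvdn_mulr // dvdn_mull // dvdn_exp2l //; lia.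
case/(prime_dvd_prod_pow (fun i _ => form_q_prime i) (isT : prime 3)) => i _ q3.
by have [_] := form_q_spec (ltn_ord i); rewrite -q3.
Qed.

Lemma form_split i :
  i < t -> exists2 m, coprime (q i) m & n = q i ^ (6 * k i + 2) * m.
Proof.
move=> it; have [_ [_ [_ def_n]]] := form; have [qi_pr qi_gt5] := form_q_spec it.
exists (5 ^ a * 3 ^ (2 * b) * \prod_(j < t | j != Ordinal it) q j ^ (6 * k j + 2)).
  rewrite prime_coprime // !Euclid_dvdM // !Euclid_dvdX //.
  rewrite (dvdn_prime2 qi_pr (isT : prime 5)) (dvdn_prime2 qi_pr (isT : prime 3)).
  have [/negbTE-> /negbTE->] : q i != 5 /\ q i != 3 by split; lia.
  apply/negP => /(prime_dvd_prod_pow (fun j _ => form_q_prime j) qi_pr).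
  case=> j jNi /(form_q_inj it (ltn_ord j)) ij.
  by rewrite -(inj_eq val_inj) /= ij eqxx in jNi.
by rewrite def_n (bigD1 (Ordinal it)) //= mulnCA.
Qed.

Hypothesis n_perfect : perfect n.

Lemma form_Phi3_closed r : prime r -> r %| n -> r != 3 -> r != 5 -> Phi3 r %| n.
Proof.
move=> r_pr rn r_neq3 r_neq5; have [n_gt0 sigma_n] := n_perfect.
case: (form_prime_dvd r_pr rn) => [r3 | r5 | [i it ->]].
- by rewrite r3 in r_neq3.
- by rewrite r5 in r_neq5.
have [qi_pr _] := form_q_spec it.
have [m qi_m def_n] := form_split it.
have [qe_gt0 m_gt0] : 0 < q i ^ (6 * k i + 2) /\ 0 < m.
  by apply/andP; rewrite -muln_gt0 -def_n.
rewrite -(Gauss_dvdr _ (_ : coprime _ 2)) ?coprimen2 ?odd_Phi3 // -sigma_n def_n.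
by rewrite sigma_coprimeM ?coprimeXl // dvdn_mulr // Phi3_dvd_sigma.
Qed.

Lemma form_not_dvdn_7 : ~~ (7 %| n).
Proof.
apply/negP => n7.
have [//|//|[i it q7]] := form_prime_dvd (isT : prime 7) n7.
have n49 : 7 ^ 2 %| n by rewrite q7 form_dvdn_q_sq.
have n3 : 3 %| n.
  exact: dvdn_trans (isT : 3 %| Phi3 7) (form_Phi3_closed (isT : prime 7) n7 isT isT).
have : 5 * 3 ^ 2 * 7 ^ 2 %| n.
  by rewrite (@Gauss_dvd (5 * 3 ^ 2)) // (@Gauss_dvd 5) // form_dvdn_5 n49 form_dvdn_3.
by move/(perfect_dvdn_sigma_leq n_perfect); rewrite leqNgt abundant_5_3_7.
Qed.

Lemma form_q_gt7 i : i < t -> 7 < q i.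
Proof.
move=> it; have [qi_pr qi_gt5] := form_q_spec it.
have qi_neq6 : q i != 6 by apply: contraTneq qi_pr => ->.
have qi_neq7 : q i != 7.
  apply: contraNneq form_not_dvdn_7 => <-.
  exact: dvdn_trans (dvdn_mulr _ (dvdnn _)) (form_dvdn_q_sq it).
lia.
Qed.

Lemma form_not_good i : i < t -> ~ good (q i).
Proof.
move=> it /(good_dvdn_7 form_Phi3_closed _) n7.
have /n7 : q i %| n by apply: dvdn_trans (dvdn_mulr _ (dvdnn _)) (form_dvdn_q_sq it).
exact/negP/form_not_dvdn_7.
Qed.

End SpecialForm.

(** * Certified primality *)

Lemma expn_mod1_dvd a m x y : a ^ x = 1 %[mod m] -> x %| y -> a ^ y = 1 %[mod m].
Proof. by move=> ax /dvdnP[c ->]; rewrite mulnC expnM -modnXm ax modnXm exp1n. Qed.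

Lemma expn_mod1_gcd a m x y : 0 < x ->
  a ^ x = 1 %[mod m] -> a ^ y = 1 %[mod m] -> a ^ gcdn x y = 1 %[mod m].
Proof.
move=> x_gt0 ax ay; have [u v def_gcd _] := egcdnP y x_gt0.
have := expn_mod1_dvd ax (dvdn_mull u (dvdnn x)).
by rewrite def_gcd expnD -modnMml (expn_mod1_dvd ay (dvdn_mull v (dvdnn y))) modnMml mul1n.
Qed.

Lemma pocklington_dvdn_pred M a p q : 1 < M -> prime p -> p %| M -> prime q ->
  q %| M.-1 -> a ^ M.-1 = 1 %[mod M] -> coprime (a ^ (M.-1 %/ q)).-1 M ->
  q %| p.-1.
Proof.
move=> M_gt1 p_pr pM q_pr qM aM cop; have M1_gt0 : 0 < M.-1 by rewrite ltn_predRL.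
have aMp : a ^ M.-1 = 1 %[mod p] by rewrite -(modn_dvdm _ pM) aM modn_dvdm.
have a_p : coprime a p.
  rewrite coprime_sym prime_coprime //; apply/negP => pa.
  by move: aMp; rewrite (eqP (dvdn_exp M1_gt0 pa)) modn_small ?prime_gt1.
have a_gt0 : 0 < a.
  move: a_p; rewrite lt0n; apply: contraTneq => ->.
  by rewrite /coprime gcd0n neq_ltn prime_gt1 ?orbT.
have ap : a ^ p.-1 = 1 %[mod p] by rewrite -totient_prime // Euler_exp_totient.
apply: contraTT cop => qNp; set g := gcdn M.-1 p.-1.
have g_dvd : g %| M.-1 %/ q.
  rewrite -(@Gauss_dvdl _ _ q) ?divnK ?dvdn_gcdl // coprime_sym prime_coprime //.
  by apply: contra qNp => /dvdn_trans; apply; apply: dvdn_gcdr.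
have a_mod1 := expn_mod1_dvd (expn_mod1_gcd M1_gt0 aMp ap) g_dvd.
have p_dvd : p %| (a ^ (M.-1 %/ q)).-1.
  by rewrite -subn1 -eqn_mod_dvd ?expn_gt0 ?a_gt0 // a_mod1.
by apply/negP => /(coprime_dvdl p_dvd); rewrite prime_coprime // pM.
Qed.

Lemma prod_primes_dvdn (qs : seq nat) d : uniq qs -> all prime qs ->
  all (dvdn^~ d) qs -> \prod_(q <- qs) q %| d.
Proof.
elim: qs => [|q qs IH] /=; first by rewrite big_nil dvd1n.
case/andP=> qNqs qs_uniq /andP[q_pr qs_pr] /andP[qd qs_d].
rewrite big_cons Gauss_dvd ?qd ?IH // big_seq.
elim/big_ind: _ => [|r s ? ?|r r_qs]; rewrite ?coprimen1 ?coprimeMr //=.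
  exact/andP.
rewrite prime_coprime // (dvdn_prime2 q_pr (allP qs_pr r r_qs)).
by apply: contraNneq qNqs => ->.
Qed.

Lemma pocklington M a (qs : seq nat) : 1 < M -> a ^ M.-1 = 1 %[mod M] ->
  uniq qs -> all prime qs ->
  (forall q, q \in qs -> q %| M.-1 /\ coprime (a ^ (M.-1 %/ q)).-1 M) ->
  M < (\prod_(q <- qs) q) ^ 2 -> prime M.
Proof.
move=> M_gt1 aM qs_uniq qs_pr qs_cert M_lt.
apply: contraLR M_lt => /primePns[|[p [p_pr p2M pM]]]; first by lia.
have F_dvd : \prod_(q <- qs) q %| p.-1.
  apply: prod_primes_dvdn => //; apply/allP => q q_qs; have [qM cop] := qs_cert q q_qs.
  exact: pocklington_dvdn_pred M_gt1 p_pr pM (allP qs_pr q q_qs) qM aM cop.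
have p1_gt0 : 0 < p.-1 by rewrite ltn_predRL prime_gt1.
by have := dvdn_leq p1_gt0 F_dvd; rewrite -leqNgt; nia.
Qed.

Lemma coprime_pred_bezout r m u v : u * (r %% m).-1 = v * m + 1 -> coprime r.-1 m.
Proof.
move=> bez; have rm_gt0 : 0 < r %% m by move: bez; case: (r %% m) => //=; lia.
have m_neq1 : m != 1 by apply: contraTneq rm_gt0 => ->; rewrite modn1.
have m_Ndvd : ~~ (m %| r) by rewrite /dvdn -lt0n.
rewrite -coprime_modl modn_pred ?(negbTE m_Ndvd) ?(leq_trans rm_gt0 (leq_mod _ _)) //.
apply/coprimeP; first by move: bez; case: (r %% m).-1 => //=; lia.
by exists (u, v) => /=; lia.
Qed.

Lemma N2Nat_mod (x y : N) : N.to_nat (x mod y) = N.to_nat x %% N.to_nat y.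
Proof.
rewrite N2Nat.inj_mod; case: (N.to_nat y) => [|d]; first by rewrite Nat.mod_0_r modn0.
apply/esym/(Nat.mod_unique _ _ (N.to_nat x %/ d.+1)); first exact/ltP/ltn_pmod.
by rewrite {1}(divn_eq (N.to_nat x) d.+1) mulnC.
Qed.

Fixpoint no_divisor_from (x d : N) (c : nat) : bool :=
  if c is c'.+1 then (x mod d != 0)%num && no_divisor_from x (N.succ d) c' else true.

Lemma no_divisor_fromP x d c : no_divisor_from x d c ->
  forall e, N.to_nat d <= e < N.to_nat d + c -> ~~ (e %| N.to_nat x).
Proof.
elim: c d => [|c IH] d /=; first by move=> _ e; lia.
case/andP=> /eqP xd /IH nd e /andP[de ec].
case: (ltngtP (N.to_nat d) e) de => // [d_lt_e _ | <- _].
  by apply: nd; rewrite N2Nat.inj_succ; lia.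
by rewrite /dvdn -N2Nat_mod; apply/eqP => xd0; apply: xd; lia.
Qed.

Definition trial_prime (x : N) : bool :=
  (1 <? x)%num && no_divisor_from x 2 (N.to_nat (N.sqrt x)).-1.

Lemma trial_primeP x : trial_prime x -> prime (N.to_nat x).
Proof.
case/andP=> /N.ltb_spec0 x_gt1 nd; apply: contraT => /primePns[|[p [p_pr p2x px]]].
  by lia.
have [_ x_lt] := N.sqrt_spec x (N.le_0_l x); have p_gt1 := prime_gt1 p_pr.
by have := @no_divisor_fromP _ _ _ nd p; rewrite px; apply; nia.
Qed.

Fixpoint pow_mod_pos (a m : N) (e : positive) : N :=
  match e with
  | xH => a mod m
  | xO e' => let r := pow_mod_pos a m e' in r * r mod m
  | xI e' => let r := pow_mod_pos a m e' in r * r * a mod m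
  end%num.

Definition pow_mod (a m e : N) : N :=
  if e is Npos e' then pow_mod_pos a m e' else (1 mod m)%num.

Lemma pow_modE a m e :
  N.to_nat (pow_mod a m e) = N.to_nat a ^ N.to_nat e %% N.to_nat m.
Proof.
case: e => [|e] /=; first by rewrite N2Nat_mod.
elim: e => [e IH|e IH|] /=; rewrite N2Nat_mod ?N2Nat.inj_mul ?IH; last by rewrite expn1.
  rewrite -modnMml modnMm modnMml -expnD -expnSr.
  by congr (_ ^ _ %% _); lia.
by rewrite modnMm -expnD; congr (_ ^ _ %% _); lia.
Qed.

(* Each entry (q, u, v) of the certificate gives a prime factor q of x - 1 together with
   a Bezout witness u * (a^((x-1)/q) mod x - 1) = v * x + 1 of coprimality. *)
Definition pocklington_cert (x a : N) (cert : seq (N * N * N)) : bool :=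
  let qs := [seq c.1.1 | c <- cert] in
  [&& (1 <? x)%num, pow_mod a x (x - 1) == 1%num, uniq qs, all trial_prime qs,
      (x <? foldr N.mul 1 qs * foldr N.mul 1 qs)%num &
      all (fun c => let: (q, u, v) := c in let e := ((x - 1) / q)%num in
             (q * e == x - 1)%num && (u * N.pred (pow_mod a x e) == v * x + 1)%num) cert].

Lemma pocklington_certP x a cert : pocklington_cert x a cert -> prime (N.to_nat x).
Proof.
set qs := [seq c.1.1 | c <- cert].
case/and5P=> /N.ltb_spec0 x_gt1 /eqP ax qs_uniq qs_pr.
case/andP=> /N.ltb_spec0 x_lt /allP cert_ok.
apply: (@pocklington _ (N.to_nat a) (map N.to_nat qs)).
- by lia.
- have := pow_modE a x (x - 1).
  rewrite ax (_ : N.to_nat (x - 1) = (N.to_nat x).-1); last by lia.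
  by move=> <-; rewrite modn_small //; lia.
- by rewrite map_inj_uniq //; apply: N2Nat.inj.
- by apply/allP => _ /mapP[q q_qs ->]; apply/trial_primeP/(allP qs_pr).
- move=> _ /mapP[_ /mapP[[[q u] v] c_cert ->] ->] /=.
  have /= /andP[/eqP qe /eqP bez] := cert_ok _ c_cert.
  set e := ((x - 1) / q)%num in qe bez.
  have x1E : (N.to_nat x).-1 = N.to_nat e * N.to_nat q by lia.
  have q_gt0 : 0 < N.to_nat q by nia.
  rewrite x1E mulnK // dvdn_mull //; split=> //.
  apply: (@coprime_pred_bezout _ _ (N.to_nat u) (N.to_nat v)).
  have := f_equal N.to_nat bez.
  by rewrite N2Nat.inj_mul N2Nat.inj_pred pow_modE N2Nat.inj_add N2Nat.inj_mul.
- have prodE : N.to_nat (foldr N.mul 1%num qs) = \prod_(q <- map N.to_nat qs) q.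
    by elim: (qs) => [|q qs' IH] /=; rewrite ?big_nil ?big_cons // N2Nat.inj_mul IH.
  by rewrite -prodE; move: x_lt; rewrite -/qs; lia.
Qed.

(** * Good primes up to 157 *)

Definition prime13 : N := 3737657091169.

Lemma prime13_prime : prime (N.to_nat prime13).
Proof.
apply: (@pocklington_certP _ 2 [:: (19, 3331805171284, 1332714329543);
  (151, 1340480728240, 1096241044511); (4519, 2155825918455, 281848005086)]%num).
by vm_compute.
Qed.

(* An [if], not [||]: [vm_compute] evaluates both arguments of [orb], and trial
   division of [prime13] is far too slow. *)
Definition certified_prime (x : N) : bool :=
  if x == prime13 then true else trial_prime x.

Lemma certified_primeP x : certified_prime x -> prime (N.to_nat x).
Proof.
rewrite /certified_prime; case: eqP => [-> _ | _].
  exact: prime13_prime.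
exact: trial_primeP.
Qed.

Fixpoint Sigma_chain (x : N) (l : seq N) : bool :=
  certified_prime x &&
  if l is y :: l' then
    [&& (7 <? x)%num, y != 3%num, ((x * x + x + 1) mod y == 0)%num & Sigma_chain y l']
  else (x mod 7 == 2)%num || (x mod 7 == 4)%num.

Lemma Sigma_chain_good x l : Sigma_chain x l -> good (N.to_nat x).
Proof.
elim: l x => [|y l IH] x /= /andP[/certified_primeP x_pr].
  move=> x_mod7; apply: inSigma_good; split=> //; rewrite -[7]/(N.to_nat 7) -N2Nat_mod.
  by case/orP: x_mod7 => /eqP->; [left | right].
case/and4P=> /N.ltb_spec0 x_gt7 /eqP y_neq3 /eqP y_dvd /[dup] chain_y /IH.
apply: good_T.
have y_pr : prime (N.to_nat y) by case: (l) chain_y => [|? ?] /andP[/certified_primeP].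
do !split=> //; try lia.
rewrite /dvdn /Phi3 (_ : _ ^ 2 + _ + 1 = N.to_nat (x * x + x + 1)) -?N2Nat_mod ?y_dvd //.
by lia.
Qed.

Definition Sigma_chains : seq (seq N) := [::
  [:: 11]; [:: 13; 61; 97; 3169; 3348577; 3737657091169; 181; 79];
  [:: 17; 307; 43; 631; 433; 37]; [:: 19; 127; 5419; 313; 181; 79]; [:: 23];
  [:: 29; 67]; [:: 31; 331]; [:: 37]; [:: 41; 1723; 990151; 147739];
  [:: 43; 631; 433; 37]; [:: 47; 37]; [:: 53]; [:: 59; 3541; 37];
  [:: 61; 97; 3169; 3348577; 3737657091169; 181; 79]; [:: 67];
  [:: 71; 5113; 8715961]; [:: 73; 1801]; [:: 79]; [:: 83; 19; 127; 5419; 313; 181; 79];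
  [:: 89; 8011; 1645747; 2503]; [:: 97; 3169; 3348577; 3737657091169; 181; 79];
  [:: 101; 10303; 5827; 433; 37]; [:: 103; 3571; 181; 79]; [:: 107]; [:: 109];
  [:: 113; 991]; [:: 127; 5419; 313; 181; 79]; [:: 131; 17293; 7668337; 24460537; 331];
  [:: 137]; [:: 139; 499]; [:: 149]; [:: 151]; [:: 157; 8269]]%num.

Lemma Sigma_chains_ok : all (fun c => Sigma_chain (head 0%num c) (behead c)) Sigma_chains.
Proof. by vm_compute. Qed.

Lemma good_le157 p : prime p -> 7 < p -> p <= 157 -> good p.
Proof.
move=> p_pr p_gt7 p_le157.
pose heads := [seq N.to_nat (head 0%num c) | c <- Sigma_chains].
have heads_ok : all (fun p => prime p ==> (p \in heads)) (iota 8 150) by vm_compute.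
have /mapP[c c_chains ->] : p \in heads.
  by apply: (implyP (allP heads_ok p _)) => //; rewrite mem_iota; lia.
exact: Sigma_chain_good (allP Sigma_chains_ok c c_chains).
Qed.

Theorem theorem1p4 :
  (* (a) *)
  (forall (n a b t : nat) (q k : nat -> nat),
      special_form n a b t q k ->
      (exists i, i < t /\ good (q i)) ->
      ~ (odd n /\ perfect n)) /\
  (* (b) *)
  (forall (n a b t : nat) (q k : nat -> nat),
      special_form n a b t q k ->
      (exists i, i < t /\ q i <= 157) ->
      ~ perfect n) /\
  (* (c) *)
  ((forall p, prime p -> 7 < p -> good p) ->
   forall (n a b t : nat) (q k : nat -> nat),
      special_form n a b t q k ->
      ~ (odd n /\ perfect n)).
Proof.
split; [|split].
- move=> n a b t q k n_form [i [it q_good]] [_ n_perfect].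
  exact: (form_not_good n_form n_perfect it q_good).
- move=> n a b t q k n_form [i [it q_le157]] n_perfect.
  apply: (form_not_good n_form n_perfect it).
  have [q_pr _] := form_q_spec n_form it.
  exact: good_le157 q_pr (form_q_gt7 n_form n_perfect it) q_le157.
- move=> all_good n a b t q k n_form [_ n_perfect].
  case: t n_form => [|t] n_form.
    have [_ [_ [_ def_n]]] := n_form.
    by move: n_perfect; rewrite def_n big_ord0 muln1; apply: not_perfect_5_3.
  have t_gt0 : 0 < t.+1 by [].
  have [q_pr _] := form_q_spec n_form t_gt0.
  apply: (form_not_good n_form n_perfect t_gt0).
  exact: all_good _ q_pr (form_q_gt7 n_form n_perfect t_gt0).
Qed.
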